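(* Let $M$ and $M'$ be two stable matchings in an instance $I$ of SPA-S, and let $s$ be a student assigned in $M$ to a project $p_j$ offered by lecturer $l_k$. If $s$ prefers $M$ to $M'$, and either $s\in M'(l_k)$ or $l_k$ prefers $s$ to at least one student in $M'(l_k)$, then $p_j$ is full in $M'$.
   Context: An instance $I$ of SPA-S consists of a finite set $\mathcal{S}$ of students, a finite set $\mathcal{P}$ of projects and a finite set $\mathcal{L}$ of lecturers. Each student $s_i$ ranks a subset $A_i\subseteq\mathcal{P}$ (its acceptable projects) in strict order. Each project is offered by exactly one lecturer; lecturer $l_k$ offers a nonempty set $P_k\subseteq\mathcal{P}$, the $P_k$ partitioning $\mathcal{P}$. Each lecturer $l_k$ ranks in strict order the students who find at least one project of $P_k$ acceptable. Projects have capacities $c_j\in\mathbb{Z}^+$, lecturers have capacities $d_k\in\mathbb{Z}^+$ with $\max\{c_j:p_j\in P_k\}\le d_k\le\sum\{c_j:p_j\in P_k\}$. A pair $(s_i,p_j)$, $p_j$ offered by $l_k$, is acceptable if $p_j\in A_i$ and $s_i$ is on $l_k$'s list. A matching $M$ is a set of acceptable pairs with each student in at most one pair, $|M(p_j)|\le c_j$, $|M(l_k)|\le d_k$, where $M(s_i)$, $M(p_j)$, $M(l_k)$ denote the project of $s_i$, the students assigned to $p_j$, and the students assigned to projects of $l_k$. Undersubscribed/full means fewer than/exactly capacity many assigned students. An acceptable pair $(s_i,p_j)\notin M$ ($p_j$ offered by $l_k$) blocks $M$ if ($s_i$ is unassigned or prefers $p_j$ to $M(s_i)$) and one of: (P1)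 $p_j$ and $l_k$ undersubscribed; (P2) $p_j$ undersubscribed, $l_k$ full, $s_i\in M(l_k)$; (P3) $p_j$ undersubscribed, $l_k$ full, $l_k$ prefers $s_i$ to the worst student of $M(l_k)$; (P4) $p_j$ full and $l_k$ prefers $s_i$ to the worst student of $M(p_j)$. $M$ is stable if it has no blocking pair. A student $s$ prefers $M$ to $M'$ if $s$ is assigned in both and prefers $M(s)$ to $M'(s)$. *)

From mathcomp Require Import all_boot.
Set Implicit Arguments. Unset Strict Implicit. Unset Printing Implicit Defensive.

Record SPAS := {
  Student : finType; Project : finType; Lecturer : finType;
  acc : Student -> Project -> bool;
  srank : Student -> Project -> nat;
  srank_inj : forall s p q, acc s p -> acc s q -> srank s p = srank s q -> p = q;
  offer : Project -> Lecturer;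
  lrank : Lecturer -> Student -> nat;
  lrank_inj : forall l s t,
      [exists p, (offer p == l) && acc s p] ->
      [exists p, (offer p == l) && acc t p] ->
      lrank l s = lrank l t -> s = t;
  pcap : Project -> nat;
  lcap : Lecturer -> nat;
  pcap_pos : forall p, 0 < pcap p;
  lcap_offers : forall l, [exists p, offer p == l];
  lcap_ge : forall p, pcap p <= lcap (offer p);
  lcap_le : forall l, lcap l <= \sum_(p | offer p == l) pcap p
}.

Section Defs.
Variable I : SPAS.

Definition on_list (l : Lecturer I) (s : Student I) : bool :=
  [exists p, (offer p == l) && acc s p].

Definition acceptable (s : Student I) (p : Project I) : bool :=
  acc s p && on_list (offer p) s.

Definition sprefers (s : Student I) (p q : Project I) : bool :=
  srank s p < srank s q.

Definition lprefers (l : Lecturer I) (s t : Student I) : bool :=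
  lrank l s < lrank l t.

Definition assignment := Student I -> option (Project I).

Definition Mp (M : assignment) (p : Project I) : {set Student I} :=
  [set s | M s == Some p].
Definition Ml (M : assignment) (l : Lecturer I) : {set Student I} :=
  [set s | if M s is Some p then offer p == l else false].

Definition is_matching (M : assignment) : Prop :=
  (forall s p, M s = Some p -> acceptable s p) /\
  (forall p, #|Mp M p| <= pcap p) /\
  (forall l, #|Ml M l| <= lcap l).

Definition p_full M p := #|Mp M p| == pcap p.
Definition p_under M p := #|Mp M p| < pcap p.
Definition l_full M l := #|Ml M l| == lcap l.
Definition l_under M l := #|Ml M l| < lcap l.

Definition is_worst (l : Lecturer I) (S : {set Student I}) (w : Student I) :=
  w \in S /\ forall t, t \in S -> lrank l t <= lrank l w.

Definition prefers_to_worst l (S : {set Student I}) s : Prop :=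
  exists w, is_worst l S w /\ lprefers l s w.

Definition blocking (M : assignment) (s : Student I) (p : Project I) : Prop :=
  let l := offer p in
  acceptable s p /\ M s <> Some p /\
  (match M s with None => True | Some q => sprefers s p q end) /\
  ( (p_under M p /\ l_under M l)
  \/ (p_under M p /\ l_full M l /\ s \in Ml M l)
  \/ (p_under M p /\ l_full M l /\ prefers_to_worst l (Ml M l) s)
  \/ (p_full M p /\ prefers_to_worst l (Mp M p) s)).

Definition stable (M : assignment) : Prop :=
  is_matching M /\ forall s p, ~ blocking M s p.

Definition sprefers_matching (M M' : assignment) (s : Student I) : Prop :=
  exists p q, M s = Some p /\ M' s = Some q /\ sprefers s p q.

End Defs.

From mathcomp Require Import all_boot.
Set Implicit Arguments. Unset Strict Implicit. Unset Printing Implicit Defensive.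

(* If p_j were undersubscribed in M', then (s, p_j) would block M': s prefers
   p_j to M'(s), and l_k is either undersubscribed (P1) or full, in which case
   s is in M'(l_k) (P2) or l_k prefers s to the worst student of M'(l_k) (P3). *)

Section Blocking.
Variable I : SPAS.
Implicit Types (M : assignment I) (s t : Student I) (p q : Project I)
  (l : Lecturer I).

Lemma p_underN_full M p : is_matching M -> ~~ p_full M p -> p_under M p.
Proof. by case=> _ [Mp_cap _] nfull; rewrite /p_under ltn_neqAle nfull Mp_cap. Qed.

Lemma l_underN_full M l : is_matching M -> ~~ l_full M l -> l_under M l.
Proof. by case=> _ [_ Ml_cap] nfull; rewrite /l_under ltn_neqAle nfull Ml_cap. Qed.

Lemma prefers_to_worst_of_lprefers l (S : {set Student I}) s t :
  t \in S -> lprefers l s t -> prefers_to_worst l S s.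
Proof.
move=> tS st; have [w wS w_max] := arg_maxnP (lrank l) tS.
by exists w; split=> //; apply: leq_trans st (w_max t tS).
Qed.

Lemma blocking_of_p_under M s p q :
  is_matching M -> acceptable s p -> M s = Some q -> sprefers s p q ->
  p_under M p ->
  (s \in Ml M (offer p) \/
   exists2 t, t \in Ml M (offer p) & lprefers (offer p) s t) ->
  blocking M s p.
Proof.
move=> matchM acc_sp Ms spq pu s_ok.
have Ms_neq : M s <> Some p by rewrite Ms => -[qp]; rewrite qp /sprefers ltnn in spq.
split=> //; split=> //; split; first by rewrite Ms.
have [lfull|/(l_underN_full matchM) lu] := boolP (l_full M (offer p)); last by left.
right; case: s_ok => [s_in|[t t_in st]]; first by left.
by right; left; do 2 split=> //; apply: prefers_to_worst_of_lprefers st.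
Qed.

End Blocking.

Theorem proposition2 (I : SPAS) (M M' : assignment I) (s : Student I) (pj : Project I) :
  stable M -> stable M' ->
  M s = Some pj ->
  sprefers_matching M M' s ->
  (s \in Ml M' (offer pj) \/
   exists t, t \in Ml M' (offer pj) /\ lprefers (offer pj) s t) ->
  p_full M' pj.
Proof.
move=> [[M_acc _] _] [matchM' M'_stable] Ms [p [q [Msp [M's spq]]]] s_ok.
move: spq; rewrite Ms in Msp; case: Msp => <- {p} spq.
apply/negPn/negP => /(p_underN_full matchM') pu.
apply: (M'_stable s pj); apply: blocking_of_p_under M's spq pu _ => //.
- exact: M_acc.
- by case: s_ok => [|[t []]]; [left | right; exists t].
Qed.
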